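(* $\mathfrak{b}\leq\mathfrak{s}(\mathbb{R})$.
   Context: $\mathfrak{b}$ is the bounding number: the smallest cardinality of a family of functions $\omega\to\omega$ not bounded by a single function modulo finite (i.e. no $f$ with $g<^*f$ for all members $g$, where $g<^*f$ means $g(n)<f(n)$ for all but finitely many $n$). For infinite sets $U, A$, say $U$ splits $A$ if both $A\cap U$ and $A\setminus U$ are infinite. $\mathfrak{s}(\mathbb{R})$ is the smallest cardinality of a family $\mathcal{U}$ of open subsets of $\mathbb{R}$ (usual topology) such that every infinite $A\subseteq\mathbb{R}$ is split by some $U\in\mathcal{U}$. *)

From HB Require Import structures.
From mathcomp Require Import all_boot all_order all_algebra.
From mathcomp Require Import all_classical all_reals all_analysis.
Set Implicit Arguments. Unset Strict Implicit. Unset Printing Implicit Defensive.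
Import Order.TTheory GRing.Theory Num.Theory numFieldNormedType.Exports.
Local Open Scope classical_set_scope.

Definition lt_star (g f : nat -> nat) : Prop :=
  exists N : nat, forall n : nat, (N <= n)%N -> (g n < f n)%N.

Definition unbounded_family (G : set (nat -> nat)) : Prop :=
  ~ exists f : nat -> nat, forall g, G g -> lt_star g f.

Definition splits {T : Type} (U A : set T) : Prop :=
  infinite_set (A `&` U) /\ infinite_set (A `\` U).

Definition open_splitting_family (R : realType) (UU : set (set R)) : Prop :=
  (forall U, UU U -> open U) /\
  (forall A : set R, infinite_set A -> exists2 U, UU U & splits U A).

From HB Require Import structures.
From mathcomp Require Import all_boot all_order all_algebra.
From mathcomp Require Import all_classical all_reals all_analysis.
From mathcomp Require Import zify lra.
Import Order.TTheory GRing.Theory Num.Theory numFieldNormedType.Exports.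
Local Open Scope classical_set_scope.
Local Open Scope ring_scope.

(* For an open U and a level n, let g_U(n) bound, over the dyadic points
   q = m 2^-n of [0, 1) lying in U, an index r with ball(q, 2^-r) ⊆ U.
   Given any f : nat -> nat, choose dyadic points p_0 < p_1 < ... with p_j of
   level n_j such that every later p_k lies within 2^-f(n_j) of p_j.  If
   g_U <* f, then from some j on, p_j ∈ U forces p_k ∈ U for all k > j, so U
   contains finitely or cofinitely many p_j and does not split {p_j}.  Hence
   no f dominates all g_U with U in a splitting family. *)

Section Dyadics.
Variable R : numFieldType.

Lemma dyadic_gt0 n : 0 < 2 ^- n :> R.
Proof. by rewrite invr_gt0 exprn_gt0. Qed.

Lemma dyadic_le m n : (m <= n)%N -> 2 ^- n <= 2 ^- m :> R.
Proof.
by move=> le_mn; rewrite lef_pV2 ?posrE ?exprn_gt0 // ler_eXn2l ?ltr1n.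
Qed.

Lemma dyadicS n : 2 ^- n.+1 + 2 ^- n.+1 = 2 ^- n :> R.
Proof. by rewrite exprS invfM mulrC -splitr. Qed.

Definition dyadic (n m : nat) : R := m%:R * 2 ^- n.

End Dyadics.
Arguments dyadic {R}.

Section DyadicBalls.
Variable R : archiRealFieldType.
Implicit Types (U : set R) (q : R).

Lemma open_dyadic_ball U q : open U -> U q ->
  exists r : nat, ball q (2 ^- r) `<=` U.
Proof.
move=> oU Uq; have /nbhs_ballP[e /= e_gt0 eU] : nbhs q U.
  exact: open_nbhs_nbhs.
have [r _ /(_ r (leqnn r))] := near_infty_natSinv_expn_lt (PosNum e_gt0).
rewrite mul1r => lt_re; exists r.
by apply: subset_trans eU; apply/le_ball/ltW.
Qed.

(* When U contains no such ball around q, [xget] returns the junk value 0. *)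
Definition ball_index U q : nat := xget 0%N [set r | ball q (2 ^- r) `<=` U].

Lemma ball_indexP U q r : open U -> U q -> (ball_index U q <= r)%N ->
  ball q (2 ^- r) `<=` U.
Proof.
move=> oU Uq le_r; have := xgetPex 0%N (open_dyadic_ball _ _ oU Uq).
by apply: subset_trans; apply/le_ball/dyadic_le.
Qed.

Definition ball_index_bound U (n : nat) : nat :=
  \max_(m < 2 ^ n) ball_index U (dyadic n m).

Lemma ball_index_boundP U n m r : open U -> (m < 2 ^ n)%N ->
  U (dyadic n m) -> (ball_index_bound U n <= r)%N ->
  ball (dyadic n m) (2 ^- r) `<=` U.
Proof.
move=> oU lt_m Um le_r; apply: ball_indexP => //.
exact: leq_trans (leq_bigmax (Ordinal lt_m)) le_r.
Qed.

End DyadicBalls.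
Arguments ball_index_bound {R}.
Arguments ball_index_boundP {R U n m r}.

Section DyadicWalk.
Variables (R : realFieldType) (f : nat -> nat).

Fixpoint level (j : nat) : nat :=
  if j is i.+1 then (level i + (f (level i)).+1)%N else 0%N.

Fixpoint numer (j : nat) : nat :=
  if j is i.+1 then (numer i * 2 ^ (f (level i)).+1).+1 else 0%N.

Definition point (j : nat) : R := dyadic (level j) (numer j).

Lemma leq_level j : (j <= level j)%N.
Proof. by elim: j => //= j IH; rewrite addnS ltnS (leq_trans IH) ?leq_addr. Qed.

Lemma numer_lt j : (numer j < 2 ^ level j)%N.
Proof.
elim: j => //= j IH; rewrite expnD.
have : (2 <= 2 ^ (f (level j)).+1)%N by rewrite -[leqLHS]expn1 leq_pexp2l.
nia.
Qed.

Lemma pointS j : point j.+1 = point j + 2 ^- level j.+1.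
Proof.
rewrite /point /dyadic /= -addn1 natrD natrM natrX exprD invfM mulrDl mul1r.
by rewrite mulrACA divff ?mulr1 // expf_neq0 // pnatr_eq0.
Qed.

Lemma point_lt : {homo point : j k / (j < k)%N >-> j < k}.
Proof. by apply: (homo_ltn lt_trans) => j; rewrite pointS ltrDl dyadic_gt0. Qed.

Lemma point_dyadic_nonincr {j k} : (j <= k)%N ->
  point k + 2 ^- level k <= point j + 2 ^- level j.
Proof.
move=> /subnKC <-; elim: (k - j)%N => [|i IH]; first by rewrite addn0.
apply: le_trans _ IH; rewrite addnS pointS -addrA lerD2l -[leRHS]dyadicS.
by apply: lerD; apply: dyadic_le; rewrite /= addnS ltnS leq_addr.
Qed.

Lemma point_ball {j k} : (j <= k)%N ->
  ball (point j) (2 ^- f (level j)) (point k).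
Proof.
rewrite leq_eqVlt => /predU1P[<-|lt_jk]; first exact/ballxx/dyadic_gt0.
rewrite -ball_normE /= distrC ger0_norm ?subr_ge0 ?ltW ?point_lt //.
have := point_dyadic_nonincr lt_jk; rewrite pointS -addrA.
have := dyadic_gt0 R (level k).
have : 2 ^- level j.+1 <= 2 ^- (f (level j)).+1 :> R.
  by apply: dyadic_le; rewrite /= leq_addl.
rewrite -[2 ^- f (level j)]dyadicS; lra.
Qed.

Lemma point_inj : injective point.
Proof. by apply/inc_inj/le_mono => j k; apply: point_lt. Qed.

Lemma infinite_range_point : infinite_set (range point).
Proof.
apply/infiniteP.
have /card_esym := inj_card_eq (A := [set: nat]) (in2W point_inj).
by rewrite card_eq_le => /andP[].
Qed.

End DyadicWalk.

Lemma upclosed_finite_or_cofinite (P : set nat) (N : nat) :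
  (forall j k, (N <= j <= k)%N -> P j -> P k) ->
  finite_set P \/ finite_set (~` P).
Proof.
move=> upP; have [[j [Nj Pj]]|noP] := pselect (exists j, (N <= j)%N /\ P j).
- right; apply: sub_finite_set (finite_II j) => k notPk /=.
  rewrite ltnNge; apply/negP => le_jk.
  by apply: notPk (upP j k _ Pj); rewrite Nj.
- left; apply: sub_finite_set (finite_II N) => k Pk /=.
  by rewrite ltnNge; apply/negP => le_Nk; apply: noP; exists k.
Qed.

Lemma dominated_open_not_splits (R : archiRealFieldType) (U : set R) f :
  open U -> lt_star (ball_index_bound U) f -> ~ splits U (range (point R f)).
Proof.
move=> oU [N dom] [infI infD].
have upU j k : (N <= j <= k)%N -> U (point R f j) -> U (point R f k).
  move=> /andP[Nj le_jk] Uj; apply: (ball_index_boundP oU (numer_lt f j) Uj).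
    exact/ltnW/dom/(leq_trans Nj (leq_level f j)).
  exact: point_ball.
have [fin|fin] := upclosed_finite_or_cofinite (point R f @^-1` U) N upU.
- apply: infI; apply: sub_finite_set (finite_image (point R f) fin).
  by move=> _ [[j _ <-] Uj]; exists j.
- apply: infD; apply: sub_finite_set (finite_image (point R f) fin).
  by move=> _ [[j _ <-] notUj]; exists j.
Qed.

Local Open Scope card_scope.

Theorem theorem3p2 (R : realType) (UU : set (set R)) :
  open_splitting_family UU ->
  exists G : set (nat -> nat), unbounded_family G /\ (G #<= UU).
Proof.
move=> [openUU splitUU]; exists (ball_index_bound @` UU).
split; last exact: card_image_le.
move=> [f dom]; have [U UUU splitU] := splitUU _ (infinite_range_point R f).
exact: dominated_open_not_splits (openUU U UUU) (dom _ (imageP _ UUU)) splitU.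
Qed.
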